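(* For every weighted digraph $D$ with $w(D)>0$, $\mathrm{mac}(D)\ge l(\theta(D))\cdot w(D)$.
   Context: A weighted digraph $D=(V,A,w)$ is a digraph without loops or parallel arcs (opposite arcs allowed) with weights $w:A\to\mathbb{R}_{\ge0}$; $w(D)$ is the total arc weight. For a partition $(X,Y)$ of $V$, $w(X,Y)$ is the total weight of arcs from $X$ to $Y$, and $\mathrm{mac}(D)=\max_{(X,Y)}w(X,Y)$. For $v\in V$, $r(v)=w^+(v)-w^-(v)$ where $w^+(v)$ ($w^-(v)$) is the total weight of arcs leaving (entering) $v$; $r^+(D)=\sum_{r(x)>0}r(x)$; and $\theta(D)=r^+(D)/w(D)\in[0,1]$. For $0\le\theta\le1$, $l(\theta)=\frac14+\frac{\theta^2}{4(1-2\theta)}$ if $\theta<1/3$ and $l(\theta)=\theta$ if $\theta\ge1/3$. *)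

From mathcomp Require Import all_boot all_order all_algebra.
Set Implicit Arguments. Unset Strict Implicit. Unset Printing Implicit Defensive.
Import Order.TTheory GRing.Theory Num.Theory.
Local Open Scope ring_scope.

(* A weighted digraph on the finite vertex set V: w x y is the weight of the arc
   x -> y; a pair with weight 0 is treated as "no arc" (this does not change any
   of the quantities below). *)
Definition weighted_digraph (R : realFieldType) (V : finType) (w : V -> V -> R) :=
  (forall x, w x x = 0) /\ (forall x y, 0 <= w x y).

Definition wtot (R : realFieldType) (V : finType) (w : V -> V -> R) : R :=
  \sum_(x : V) \sum_(y : V) w x y.

Definition wcut (R : realFieldType) (V : finType) (w : V -> V -> R) (X Y : {set V}) : R :=
  \sum_(x in X) \sum_(y in Y) w x y.

Definition mac (R : realFieldType) (V : finType) (w : V -> V -> R) : R :=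
  \big[Num.max/0]_(X : {set V}) wcut w X (~: X).

Definition wout (R : realFieldType) (V : finType) (w : V -> V -> R) (v : V) : R :=
  \sum_(y : V) w v y.
Definition win (R : realFieldType) (V : finType) (w : V -> V -> R) (v : V) : R :=
  \sum_(x : V) w x v.

Definition rdiff (R : realFieldType) (V : finType) (w : V -> V -> R) (v : V) : R :=
  wout w v - win w v.

Definition rplus (R : realFieldType) (V : finType) (w : V -> V -> R) : R :=
  \sum_(x : V | 0 < rdiff w x) rdiff w x.

Definition theta (R : realFieldType) (V : finType) (w : V -> V -> R) : R :=
  rplus w / wtot w.

Definition lfun (R : realFieldType) (t : R) : R :=
  if t < 3^-1 then 4^-1 + t ^+ 2 / (4 * (1 - 2 * t)) else t.

From mathcomp Require Import all_boot all_order all_algebra.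
From mathcomp Require Import ring lra.
Set Implicit Arguments. Unset Strict Implicit. Unset Printing Implicit Defensive.
Import Order.TTheory GRing.Theory Num.Theory.
Local Open Scope ring_scope.

(* Proof idea: relax cuts to fractional cuts.  For p : V -> [0,1] put
     fcut p = sum_{x,y} w(x,y) p(x) (1 - p(y)),
   so that fcut (chi X) = w(X, V\X) for the indicator chi X of a set X.
   Since there are no loops, fcut is affine in each single coordinate, so
   rounding the coordinates one by one to 0 or 1 never decreases it: every
   fractional cut is at most mac(D).
   Let P be the set of vertices with r > 0, so r^+ = sum_{x in P} r(x).
   Summing arc by arc, r^+ <= fcut (chi P); this gives mac >= r^+ = theta w(D),
   the bound for theta >= 1/3.  For theta < 1/3 we use the shifted indicator
   q = 1/2 + a (2 chi P - 1), whose fractional cut is at least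
   w/4 - a^2 w + (a + 2 a^2) r^+; the choice a = theta / (2 (1 - 2 theta))
   lies in [0, 1/2], so q is fractional, and turns this bound into l(theta) w. *)

Section FractionalCuts.
Variables (R : realFieldType) (V : finType) (w : V -> V -> R).

Definition fcut (p : V -> R) : R := \sum_x \sum_y w x y * (p x * (1 - p y)).

Definition chi (X : {set V}) (x : V) : R := if x \in X then 1 else 0.

Definition setp (p : V -> R) (v : V) (t : R) (x : V) : R :=
  if x == v then t else p x.

Lemma chi01 X x : chi X x = 0 \/ chi X x = 1.
Proof. by rewrite /chi; case: ifP; [right | left]. Qed.

Lemma fcut_chi X : fcut (chi X) = wcut w X (~: X).
Proof.
rewrite /fcut /wcut [RHS]big_mkcond; apply: eq_bigr => x _; rewrite /chi.
case: (x \in X); last by rewrite big1 // => y _; ring.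
rewrite [RHS]big_mkcond; apply: eq_bigr => y _.
by rewrite inE; case: (y \in X) => /=; ring.
Qed.

Lemma fcut_integral p : (forall x, p x = 0 \/ p x = 1) ->
  fcut p = wcut w [set x | p x == 1] (~: [set x | p x == 1]).
Proof.
move=> p01; rewrite -fcut_chi; apply: eq_bigr => x _; apply: eq_bigr => y _.
have chiE z : p z = chi [set z | p z == 1] z.
  by rewrite /chi inE; case: (p01 z) => ->; rewrite ?eqxx // eq_sym oner_eq0.
by rewrite -!chiE.
Qed.

Lemma wcut_le_mac X : wcut w X (~: X) <= mac w.
Proof. exact: (@le_bigmax _ R _ 0 (fun X => wcut w X (~: X))). Qed.

Hypothesis loopless : forall x, w x x = 0.

Lemma fcut_affine p v :
  fcut p = (1 - p v) * fcut (setp p v 0) + p v * fcut (setp p v 1).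
Proof.
rewrite /fcut !mulr_sumr -big_split; apply: eq_bigr => x _.
rewrite !mulr_sumr -big_split; apply: eq_bigr => y _ /=.
rewrite /setp; case: eqP => [-> | _]; case: eqP => [-> | _];
  rewrite ?loopless; ring.
Qed.

Lemma fcut_round p v : 0 <= p v <= 1 ->
  exists2 t, t = 0 \/ t = 1 & fcut p <= fcut (setp p v t).
Proof.
move=> /andP [p0 p1]; rewrite (fcut_affine p v).
have [le01 | lt10] := lerP (fcut (setp p v 0)) (fcut (setp p v 1)).
  by exists 1; [right | nra].
by exists 0; [left | nra].
Qed.

(* Every fractional cut is bounded by the maximum cut: by induction on a list
   s containing all fractional coordinates, round them one after the other. *)
Lemma fcut_le_mac p : (forall x, 0 <= p x <= 1) -> fcut p <= mac w.
Proof.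
suff rounding (s : seq V) q : (forall x, 0 <= q x <= 1) ->
    (forall x, x \notin s -> q x = 0 \/ q x = 1) -> fcut q <= mac w.
  by move=> p01; apply: (rounding (enum V)) => // x; rewrite mem_enum.
elim: s q => [|v s IH] q q01 qint.
  by rewrite fcut_integral ?wcut_le_mac // => x; apply: qint.
have [t t01 le_round] := fcut_round (q01 v).
apply: (le_trans le_round); apply: IH => [x | x xs]; rewrite /setp.
  by case: eqP => // _; case: t01 => ->; rewrite lexx ler01.
case: eqP => [// | /eqP xv]; apply: qint.
by rewrite inE negb_or xv.
Qed.

Hypothesis nonneg : forall x y, 0 <= w x y.

(* The net out-weight sum_{x in X} r(x) is w(X, V\X) - w(V\X, X); below it is
   written arc by arc and hence bounded by the cut w(X, V\X). *)
Lemma sum_rdiff (X : {set V}) :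
  \sum_(x in X) rdiff w x = \sum_x \sum_y w x y * (chi X x - chi X y).
Proof.
have splitE : \sum_x \sum_y w x y * (chi X x - chi X y) =
    \sum_x \sum_y w x y * chi X x - \sum_x \sum_y w y x * chi X x.
  rewrite [Z in _ = _ - Z]exchange_big -sumrB; apply: eq_bigr => x _.
  by rewrite -sumrB; apply: eq_bigr => y _; ring.
rewrite splitE -sumrB big_mkcond; apply: eq_bigr => x _.
rewrite /rdiff /wout /win -!mulr_suml /chi.
by case: (x \in X); rewrite ?mulr1 ?mulr0 ?subr0.
Qed.

Lemma sum_rdiff_le_fcut (X : {set V}) : \sum_(x in X) rdiff w x <= fcut (chi X).
Proof.
rewrite sum_rdiff; apply: ler_sum => x _; apply: ler_sum => y _.
by have := nonneg x y; case: (chi01 X x) => ->; case: (chi01 X y) => ->; nra.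
Qed.

(* Lower bound on the fractional cut of the shifted indicator
   q = 1/2 + a (2 chi X - 1) of X, valid for every real a: arc by arc,
   q x (1 - q y) = 1/4 - a^2 + a (chi X x - chi X y)
                   + 2 a^2 (chi X x (1 - chi X y) + chi X y (1 - chi X x)),
   and the last summand is at least 2 a^2 chi X x (1 - chi X y). *)
Lemma fcut_shifted (X : {set V}) (a : R) :
  4^-1 * wtot w - a ^+ 2 * wtot w + (a + 2 * a ^+ 2) * \sum_(x in X) rdiff w x
  <= fcut (fun x => 2^-1 + a * (2 * chi X x - 1)).
Proof.
have fcut_ge0 : 0 <= 2 * a ^+ 2 * (fcut (chi X) - \sum_(x in X) rdiff w x).
  apply: mulr_ge0; first by rewrite mulr_ge0 ?sqr_ge0.
  by rewrite subr_ge0 sum_rdiff_le_fcut.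
apply: le_trans (_ : 4^-1 * wtot w - a ^+ 2 * wtot w
    + a * \sum_(x in X) rdiff w x + 2 * a ^+ 2 * fcut (chi X) <= _).
  by move: fcut_ge0; rewrite mulrBr mulrDl; lra.
rewrite sum_rdiff /wtot /fcut !mulr_sumr -!sumrB -!big_split /=.
apply: ler_sum => x _; rewrite !mulr_sumr -!sumrB -!big_split /=.
apply: ler_sum => y _; have := nonneg x y.
by have := sqr_ge0 a; case: (chi01 X x) => ->; case: (chi01 X y) => ->; nra.
Qed.

End FractionalCuts.
Arguments chi {R V} X x.

Theorem mainTheorem6 (R : realFieldType) (V : finType) (w : V -> V -> R) :
  weighted_digraph w -> 0 < wtot w ->
  lfun (theta w) * wtot w <= mac w.
Proof.
move=> [loopless nonneg] wpos; set W := wtot w; set t := theta w.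
set P := [set x | 0 < rdiff w x].
have rplusE : rplus w = \sum_(x in P) rdiff w x.
  by apply: eq_bigl => x; rewrite inE.
have rplus_tW : rplus w = t * W by rewrite /t /theta divfK // gt_eqF.
have rplus_ge0 : 0 <= rplus w by apply: sumr_ge0 => x /ltW.
have t_ge0 : 0 <= t by rewrite divr_ge0 // ltW.
rewrite /lfun; case: ifPn => [t_small | _].
  pose a := t / (2 * (1 - 2 * t)).
  have denom_pos : 0 < 1 - 2 * t by lra.
  have a_ge0 : 0 <= a by rewrite divr_ge0 //; lra.
  have a_le_half : a <= 2^-1 by rewrite ler_pdivrMr; lra.
  pose q x := 2^-1 + a * (2 * chi P x - 1).
  have q01 x : 0 <= q x <= 1.
    by rewrite /q /chi; case: (x \in P); apply/andP; split; lra.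
  have lfunE : (4^-1 + t ^+ 2 / (4 * (1 - 2 * t))) * W =
      4^-1 * W - a ^+ 2 * W + (a + 2 * a ^+ 2) * (t * W).
    by rewrite /a; field; lra.
  rewrite lfunE -rplus_tW rplusE.
  exact: le_trans (fcut_shifted nonneg P a) (fcut_le_mac loopless q01).
rewrite -rplus_tW rplusE; apply: le_trans (sum_rdiff_le_fcut nonneg P) _.
apply: (fcut_le_mac loopless (p := chi P)) => x.
by rewrite /chi; case: (x \in P); rewrite lexx ler01.
Qed.
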